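(* Let $A,B\in\mathcal M_n$ be accretive and $f\in\mathfrak m$. Then $$\Re(A\sigma_fB)\ge(\Re A)\,\sigma_f\,(\Re B).$$ In particular, $A\sigma_fB$ is accretive.
   Context: A matrix $A$ is accretive if $\Re A=\frac{A+A^*}{2}$ is positive definite. $\le$ is the Löwner order. $\mathfrak m$ is the set of matrix monotone $f:(0,\infty)\to(0,\infty)$ with $f(1)=1$; each has a unique probability measure $\nu_f$ on $[0,1]$ with $f(x)=\int_0^1((1-t)+tx^{-1})^{-1}d\nu_f(t)$, $x>0$. For accretive (in particular positive definite) $A,B$: $A!_tB=((1-t)A^{-1}+tB^{-1})^{-1}$ and $A\sigma_fB:=\int_0^1A!_tB\,d\nu_f(t)$ (for positive definite $A,B$ this is the Kubo–Ando mean $A^{1/2}f(A^{-1/2}BA^{-1/2})A^{1/2}$). *)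

From Stdlib Require Import Reals ClassicalEpsilon.
Open Scope R_scope.

Record C := mkC { re : R; im : R }.
Definition C0 : C := mkC 0 0.
Definition C1 : C := mkC 1 0.
Definition RtoC (r : R) : C := mkC r 0.
Definition Cadd (z w : C) : C := mkC (re z + re w) (im z + im w).
Definition Copp (z : C) : C := mkC (- re z) (- im z).
Definition Cmul (z w : C) : C :=
  mkC (re z * re w - im z * im w) (re z * im w + im z * re w).
Definition Cconj (z : C) : C := mkC (re z) (- im z).
Definition Cscal (r : R) (z : C) : C := mkC (r * re z) (r * im z).

Fixpoint Csum (n : nat) (g : nat -> C) : C :=
  match n with O => C0 | S m => Cadd (Csum m g) (g m) end.

(* ---------- matrices: an n x n matrix is given by its entries (i,j), i,j < n;
   entries outside the n x n block are irrelevant ---------- *)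
Definition Mat := nat -> nat -> C.
Definition Vec := nat -> C.

Definition meq (n : nat) (A B : Mat) : Prop :=
  forall i j, (i < n)%nat -> (j < n)%nat -> A i j = B i j.
Definition mId : Mat := fun i j => if Nat.eqb i j then C1 else C0.
Definition mzero : Mat := fun _ _ => C0.
Definition madd (A B : Mat) : Mat := fun i j => Cadd (A i j) (B i j).
Definition msub (A B : Mat) : Mat := fun i j => Cadd (A i j) (Copp (B i j)).
Definition mscal (r : R) (A : Mat) : Mat := fun i j => Cscal r (A i j).
Definition mmul (n : nat) (A B : Mat) : Mat :=
  fun i j => Csum n (fun k => Cmul (A i k) (B k j)).
Definition madj (A : Mat) : Mat := fun i j => Cconj (A j i).
Definition mdiag (l : nat -> R) : Mat :=
  fun i j => if Nat.eqb i j then RtoC (l i) else C0.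

Definition ReM (A : Mat) : Mat := mscal (/ 2) (madd A (madj A)).

Definition qform (n : nat) (A : Mat) (x : Vec) : C :=
  Csum n (fun i => Csum n (fun j => Cmul (Cconj (x i)) (Cmul (A i j) (x j)))).
Definition nonzero_vec (n : nat) (x : Vec) : Prop :=
  exists i, (i < n)%nat /\ x i <> C0.

Definition hermitian (n : nat) (A : Mat) : Prop := meq n (madj A) A.
Definition posdef (n : nat) (A : Mat) : Prop :=
  hermitian n A /\ forall x, nonzero_vec n x -> 0 < re (qform n A x).
Definition possemidef (n : nat) (A : Mat) : Prop :=
  hermitian n A /\ forall x, 0 <= re (qform n A x).

Definition loewner_le (n : nat) (A B : Mat) : Prop := possemidef n (msub B A).

Definition accretive (n : nat) (A : Mat) : Prop := posdef n (ReM A).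

Definition is_inverse (n : nat) (A X : Mat) : Prop :=
  meq n (mmul n A X) mId /\ meq n (mmul n X A) mId.
Definition minv (n : nat) (A : Mat) : Mat :=
  epsilon (inhabits mzero) (fun X => is_inverse n A X).

Definition harm (n : nat) (t : R) (A B : Mat) : Mat :=
  minv n (madd (mscal (1 - t) (minv n A)) (mscal t (minv n B))).

(* ---------- probability measures on [0,1] ----------
   No measure theory is available; a Borel probability measure nu on [0,1]
   is represented (Riesz) by its integration functional L g = int g dnu,
   a normalized positive linear functional on C([0,1]) which only depends
   on the values of g on [0,1]. *)
Definition in01 (t : R) : Prop := 0 <= t <= 1.
Definition cont01 (g : R -> R) : Prop :=
  forall t, in01 t -> limit1_in g in01 (g t) t.

Definition prob01 (L : (R -> R) -> R) : Prop :=
  (forall g h, (forall t, in01 t -> g t = h t) -> L g = L h) /\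
  (forall a b g h, cont01 g -> cont01 h ->
     L (fun t => a * g t + b * h t) = a * L g + b * L h) /\
  (forall g, cont01 g -> (forall t, in01 t -> 0 <= g t) -> 0 <= L g) /\
  L (fun _ => 1) = 1.

Definition mint (L : (R -> R) -> R) (F : R -> Mat) : Mat :=
  fun i j => mkC (L (fun t => re (F t i j))) (L (fun t => im (F t i j))).

Definition msigma (n : nat) (L : (R -> R) -> R) (A B : Mat) : Mat :=
  mint L (fun t => harm n t A B).

Definition unitary (n : nat) (U : Mat) : Prop :=
  meq n (mmul n (madj U) U) mId /\ meq n (mmul n U (madj U)) mId.

Definition matfun (n : nat) (f : R -> R) (A F : Mat) : Prop :=
  exists (U : Mat) (l : nat -> R),
    unitary n U /\ (forall i, (i < n)%nat -> 0 < l i) /\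
    meq n A (mmul n (mmul n U (mdiag l)) (madj U)) /\
    meq n F (mmul n (mmul n U (mdiag (fun i => f (l i)))) (madj U)).

Definition matrix_monotone (f : R -> R) : Prop :=
  forall (m : nat) (A B FA FB : Mat),
    posdef m A -> loewner_le m A B ->
    matfun m f A FA -> matfun m f B FB -> loewner_le m FA FB.

Definition in_m (f : R -> R) : Prop :=
  matrix_monotone f /\ (forall x, 0 < x -> 0 < f x) /\ f 1 = 1.

Definition represents (f : R -> R) (L : (R -> R) -> R) : Prop :=
  prob01 L /\ forall x, 0 < x -> f x = L (fun t => / ((1 - t) + t * / x)).

From Pilot Require Import Defs.
From Stdlib Require Import Reals Lra Lia ClassicalEpsilon.
From mathcomp Require Import all_boot all_order all_algebra complex Rstruct.

(* For t in [0, 1] put H = A !_t B, y = H x, u = A^-1 y and v = B^-1 y.  Then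
   x = (1 - t) u + t v and x* H x = (1 - t) u* A u + t v* B v, whose real part
   is (1 - t) u* (Re A) u + t v* (Re B) v.  For positive definite P, Q the form
   x* (P !_t Q) x is the minimum of (1 - t) u* P u + t v* Q v over all such
   decompositions of x, so Re x* (A !_t B) x >= x* ((Re A) !_t (Re B)) x for
   every t.  By Cramer's rule both sides are continuous in t, so they can be
   integrated against nu_f, a positive linear functional on C([0, 1]); this
   gives the Loewner inequality.  Strict positivity of Re (A sigma_f B) holds
   because a continuous function positive on [0, 1] has a positive minimum. *)

Set Implicit Arguments.
Unset Strict Implicit.
Unset Printing Implicit Defensive.

Local Open Scope R_scope.

Definition clamp (t : R) : R := (Rabs t - Rabs (t - 1) + 1) / 2.

Lemma clamp_in01 t : in01 (clamp t).
Proof. rewrite /in01 /clamp /Rabs; case: Rcase_abs; case: Rcase_abs; lra. Qed.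

Lemma clamp_id t : in01 t -> clamp t = t.
Proof. rewrite /in01 /clamp /Rabs => ?; case: Rcase_abs; case: Rcase_abs; lra. Qed.

Lemma continuity_clamp : continuity clamp.
Proof.
have cst c : continuity (fun _ => c) by apply: continuity_const.
apply: continuity_mult; last exact: cst.
apply: continuity_plus; last exact: cst.
apply: continuity_minus; first exact: Rcontinuity_abs.
move=> t; apply: (continuity_pt_comp (fun t => t - 1) Rabs); last exact: Rcontinuity_abs.
by apply: continuity_minus; [apply: derivable_continuous; apply: derivable_id | exact: cst].
Qed.

(* Unlike [cont01], this class is closed under the algebraic operations by the
   Stdlib continuity lemmas. *)
Definition ext_continuous (g : R -> R) :=
  exists h, continuity h /\ forall t, in01 t -> g t = h t.

Lemma ext_continuous_cont01 g : ext_continuous g -> cont01 g.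
Proof.
move=> [h [hc gh]] t t01 e e0.
have [d [d0 hd]] := hc t e e0.
exists d; split => // y [y01 dyt]; rewrite gh // gh //.
have [<-|ty] := Req_dec t y; last by apply: hd.
by rewrite /dist /= /R_dist Rminus_diag Rabs_R0.
Qed.

Lemma ext_continuous_eq01 g1 g2 :
  (forall t, in01 t -> g1 t = g2 t) -> ext_continuous g2 -> ext_continuous g1.
Proof. by move=> e [h [hc gh]]; exists h; split => // t t01; rewrite e ?gh. Qed.

Lemma ext_continuousW h : continuity h -> ext_continuous h.
Proof. by exists h. Qed.

Lemma ext_continuous_const c : ext_continuous (fun _ => c).
Proof. exact/ext_continuousW/continuity_const. Qed.

Lemma ext_continuous_add g1 g2 :
  ext_continuous g1 -> ext_continuous g2 -> ext_continuous (fun t => g1 t + g2 t).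
Proof.
move=> [h1 [c1 e1]] [h2 [c2 e2]]; exists (fun t => h1 t + h2 t).
by split=> [|t t01]; [exact: continuity_plus | rewrite e1 ?e2].
Qed.

Lemma ext_continuous_scal c g : ext_continuous g -> ext_continuous (fun t => c * g t).
Proof.
move=> [h [hc e]]; exists (fun t => c * h t).
by split=> [|t t01]; [exact: continuity_scal | rewrite e].
Qed.

Lemma ext_continuous_sub g1 g2 :
  ext_continuous g1 -> ext_continuous g2 -> ext_continuous (fun t => g1 t - g2 t).
Proof.
move=> c1 c2; apply: (@ext_continuous_eq01 _ (fun t => g1 t + -1 * g2 t)).
  by move=> t _; ring.
exact/ext_continuous_add/ext_continuous_scal.
Qed.

Fixpoint Rsum (m : nat) (f : nat -> R) : R :=
  match m with O => 0 | S k => Rsum k f + f k end.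

Lemma Rsum_ext m f g : (forall k, (k < m)%coq_nat -> f k = g k) -> Rsum m f = Rsum m g.
Proof.
elim: m => //= m IH e; rewrite IH => [|k km]; last by apply: e; lia.
by rewrite e //; lia.
Qed.

Lemma ext_continuous_Rsum m (g : nat -> R -> R) :
  (forall k, (k < m)%coq_nat -> ext_continuous (g k)) ->
  ext_continuous (fun t => Rsum m (fun k => g k t)).
Proof.
elim: m => [|m IH] cg /=; first exact: ext_continuous_const.
by apply: ext_continuous_add; [apply: IH => k km |]; apply: cg; lia.
Qed.

Lemma re_Csum m f : re (Csum m f) = Rsum m (fun k => re (f k)).
Proof. by elim: m => //= m ->. Qed.

Lemma re_qform_sum n A x : re (qform n A x) =
  Rsum n (fun i => Rsum n (fun j =>
    re (Cmul (Cconj (x i)) (x j)) * re (A i j) - im (Cmul (Cconj (x i)) (x j)) * im (A i j))).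
Proof.
rewrite /qform re_Csum; apply: Rsum_ext => i _; rewrite re_Csum; apply: Rsum_ext => j _.
by case: (x i) => ? ?; case: (x j) => ? ?; case: (A i j) => ? ? /=; ring.
Qed.

Definition entries_ext_continuous n (F : R -> Mat) :=
  forall i j, (i < n)%coq_nat -> (j < n)%coq_nat ->
  ext_continuous (fun t => re (F t i j)) /\ ext_continuous (fun t => im (F t i j)).

Section ProbabilityFunctional.
Variable L : (R -> R) -> R.
Hypothesis hL : prob01 L.

Lemma L_ext g h : (forall t, in01 t -> g t = h t) -> L g = L h.
Proof. by case: hL => ext _; apply: ext. Qed.

Lemma L_lin a b g h : ext_continuous g -> ext_continuous h ->
  L (fun t => a * g t + b * h t) = a * L g + b * L h.
Proof. by case: hL => _ [lin _] cg ch; apply: lin; apply: ext_continuous_cont01. Qed.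

Lemma L_ge0 g : ext_continuous g -> (forall t, in01 t -> 0 <= g t) -> 0 <= L g.
Proof. by case: hL => _ [_ [pos _]] cg; apply: pos; apply: ext_continuous_cont01. Qed.

Lemma L_add g h : ext_continuous g -> ext_continuous h ->
  L (fun t => g t + h t) = L g + L h.
Proof.
move=> cg ch; have -> : L g + L h = 1 * L g + 1 * L h by ring.
by rewrite -L_lin //; apply: L_ext => t _; ring.
Qed.

Lemma L_scal c g : ext_continuous g -> L (fun t => c * g t) = c * L g.
Proof.
move=> cg; have -> : c * L g = c * L g + 0 * L g by ring.
by rewrite -L_lin //; apply: L_ext => t _; ring.
Qed.

Lemma L_sub g h : ext_continuous g -> ext_continuous h ->
  L (fun t => g t - h t) = L g - L h.
Proof.
move=> cg ch; have -> : L g - L h = 1 * L g + -1 * L h by ring.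
by rewrite -L_lin //; apply: L_ext => t _; ring.
Qed.

Lemma L_const c : L (fun _ => c) = c.
Proof.
case: hL => _ [_ [_ L1]].
rewrite -[RHS]Rmult_1_r -L1 -L_scal; last exact: ext_continuous_const.
by apply: L_ext => t _; ring.
Qed.

Lemma L_Rsum m (g : nat -> R -> R) : (forall k, (k < m)%coq_nat -> ext_continuous (g k)) ->
  L (fun t => Rsum m (fun k => g k t)) = Rsum m (fun k => L (g k)).
Proof.
elim: m => [|m IH] cg /=; first exact: L_const.
rewrite L_add ?IH //; try (apply: cg; lia).
  by move=> k km; apply: cg; lia.
by apply: ext_continuous_Rsum => k km; apply: cg; lia.
Qed.

Lemma L_gt0 g : continuity g -> (forall t, in01 t -> 0 < g t) -> 0 < L g.
Proof.
move=> cg gpos.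
have [m [gm m01]] := continuity_ab_min g 0 1 Rle_0_1 (fun c _ => cg c).
have : 0 <= L (fun t => g t - g m).
  by apply: L_ge0 => [|t t01]; [exact/ext_continuousW/continuity_minus/continuity_const | have := gm t t01; lra].
rewrite L_sub ?L_const; [have := gpos m m01; lra | exact: ext_continuousW | exact: ext_continuous_const].
Qed.

Lemma re_qform_mint n (F : R -> Mat) x : entries_ext_continuous n F ->
  re (qform n (mint L F) x) = L (fun t => re (qform n (F t) x)).
Proof.
move=> cF; rewrite (L_ext (h := fun t => Rsum n (fun i => Rsum n (fun j =>
    re (Cmul (Cconj (x i)) (x j)) * re (F t i j) - im (Cmul (Cconj (x i)) (x j)) * im (F t i j)))));
  last by move=> t _; apply: re_qform_sum.
have cij i j : (i < n)%coq_nat -> (j < n)%coq_nat -> ext_continuous (fun t =>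
    re (Cmul (Cconj (x i)) (x j)) * re (F t i j) - im (Cmul (Cconj (x i)) (x j)) * im (F t i j)).
  move=> ilt jlt; have [cre cim] := cF i j ilt jlt.
  by apply: ext_continuous_sub; apply: ext_continuous_scal.
rewrite re_qform_sum L_Rsum; last by move=> i ?; apply: ext_continuous_Rsum => j ?; apply: cij.
apply: Rsum_ext => i ilt; rewrite L_Rsum; last by move=> j ?; apply: cij.
apply: Rsum_ext => j jlt; have [cre cim] := cF i j ilt jlt.
by rewrite L_sub ?L_scal //; apply: ext_continuous_scal.
Qed.

Lemma mint_hermitian n (F : R -> Mat) : entries_ext_continuous n F ->
  (forall t, in01 t -> Defs.hermitian n (F t)) -> Defs.hermitian n (mint L F).
Proof.
move=> cF hF i j ilt jlt; rewrite /madj /mint /Cconj /=; congr mkC.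
  by apply: L_ext => t t01; rewrite -(hF t t01 i j ilt jlt).
rewrite -(Rmult_1_l (L _)) Ropp_mult_distr_l -L_scal; last by have [] := cF j i jlt ilt.
by apply: L_ext => t t01; rewrite -(hF t t01 j i jlt ilt) /madj /=; ring.
Qed.

End ProbabilityFunctional.

(* The scalar of [ReM]; in ring_scope the numeral 2 would denote [2%:R]. *)
Definition Rhalf : R := / 2.

Lemma Rhalf_double a : Rhalf * (a + a) = a.
Proof. by rewrite /Rhalf; field. Qed.

From mathcomp Require Import ring lra.
Import Order.TTheory GRing.Theory Num.Theory.
Local Open Scope ring_scope.
Local Open Scope complex_scope.

Notation CM := (complex R).
Notation Rc := complex.Re.
Notation Ic := complex.Im.

Definition toC (z : Defs.C) : CM := Complex (re z) (im z).
Definition fromC (z : CM) : Defs.C := mkC (Rc z) (Ic z).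

Lemma toCK z : toC (fromC z) = z. Proof. by case: z. Qed.
Lemma toC_inj z w : toC z = toC w -> z = w.
Proof. by case: z; case: w => ? ? ? ? [-> ->]. Qed.

Lemma toC_add z w : toC (Cadd z w) = toC z + toC w. Proof. by case: z; case: w. Qed.
Lemma toC_opp z : toC (Copp z) = - toC z. Proof. by case: z. Qed.
Lemma toC_mul z w : toC (Cmul z w) = toC z * toC w. Proof. by case: z; case: w. Qed.
Lemma toC_conj z : toC (Cconj z) = conjc (toC z). Proof. by case: z. Qed.

Lemma toC_scal r z : toC (Cscal r z) = r%:C * toC z.
Proof. by case: z => a b; apply/eqP; rewrite eq_complex /= !mul0r subr0 addr0 !eqxx. Qed.

Lemma toC_sum n g : toC (Csum n g) = \sum_(k < n) toC (g k).
Proof. by elim: n => [|n IH]; rewrite ?big_ord0 // big_ord_recr /= toC_add IH. Qed.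

Definition adjM m p (M : 'M[CM]_(m, p)) : 'M[CM]_(p, m) := (map_mx conjc M)^T.
Definition inner n (u w : 'cV[CM]_n) : CM := (adjM u *m w) 0 0.
Definition QF n (M : 'M[CM]_n) (v : 'cV[CM]_n) : CM := inner v (M *m v).

Definition toM n (A : Mat) : 'M[CM]_n := \matrix_(i, j) toC (A i j).
Definition toV n (x : Vec) : 'cV[CM]_n := \col_i toC (x i).

Definition fromM n (M : 'M[CM]_n) : Mat := fun i j =>
  match insub i, insub j with
  | Some i', Some j' => fromC (M i' j') | _, _ => Defs.C0 end.
Definition fromV n (v : 'cV[CM]_n) : Vec := fun i =>
  if insub i is Some i' then fromC (v i' 0) else Defs.C0.

Lemma fromMK n M : toM n (fromM M) = M.
Proof. by apply/matrixP => i j; rewrite mxE /fromM !valK toCK. Qed.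

Lemma fromVK n v : toV n (@fromV n v) = v.
Proof. by apply/matrixP => i j; rewrite mxE /fromV valK toCK (ord1 j). Qed.

Lemma toM_mul n A B : toM n (mmul n A B) = toM n A *m toM n B.
Proof.
apply/matrixP => i j; rewrite !mxE toC_sum; apply: eq_bigr => k _.
by rewrite toC_mul !mxE.
Qed.

Lemma toM_add n A B : toM n (madd A B) = toM n A + toM n B.
Proof. by apply/matrixP => i j; rewrite !mxE toC_add. Qed.

Lemma toM_sub n A B : toM n (msub A B) = toM n A - toM n B.
Proof. by apply/matrixP => i j; rewrite !mxE toC_add toC_opp. Qed.

Lemma toM_scal n r A : toM n (mscal r A) = r%:C *: toM n A.
Proof. by apply/matrixP => i j; rewrite !mxE toC_scal. Qed.

Lemma toM_adj n A : toM n (madj A) = adjM (toM n A).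
Proof. by apply/matrixP => i j; rewrite !mxE toC_conj. Qed.

Lemma toM_id n : toM n mId = 1%:M.
Proof.
apply/matrixP => i j; rewrite /mId !mxE.
have [<-|ij] := eqVneq i j; first by rewrite Nat.eqb_refl.
by have /Nat.eqb_neq -> : nat_of_ord i <> j by move=> /val_inj /eqP; rewrite (negPf ij).
Qed.

Lemma meqP n A B : meq n A B <-> toM n A = toM n B.
Proof.
split=> [AB | /matrixP AB i j /ssrnat.ltP ilt /ssrnat.ltP jlt].
  by apply/matrixP => i j; rewrite !mxE AB //; apply/ssrnat.ltP.
by apply: toC_inj; have := AB (Ordinal ilt) (Ordinal jlt); rewrite !mxE.
Qed.

Lemma nonzeroP n x : nonzero_vec n x <-> toV n x != 0.
Proof.
split=> [[i [/ssrnat.ltP ilt xi]] | x0].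
  apply: contra_notN xi => /eqP/matrixP/(_ (Ordinal ilt) 0).
  by rewrite !mxE /= => /(congr1 fromC) /=; case: (x i) => ? ? [-> ->].
apply: NNPP => xz; move/eqP: x0; apply; apply/matrixP => i j; rewrite !mxE.
apply: NNPP => xi; apply: xz; exists i; split; first by apply/ssrnat.ltP.
by move=> xi0; apply: xi; rewrite xi0.
Qed.

Lemma minv_spec n A : toM n A \in unitmx -> toM n (minv n A) = invmx (toM n A).
Proof.
move=> uA; have invA : exists X, is_inverse n A X.
  by exists (fromM (invmx (toM n A))); split; apply/meqP;
    rewrite toM_mul fromMK toM_id ?mulmxV ?mulVmx.
have [/meqP + _] := epsilon_spec (inhabits mzero) _ invA.
rewrite toM_mul toM_id -/(minv n A) => AX.
by rewrite -[toM n (minv n A)]mul1mx -(mulVmx uA) -mulmxA AX mulmx1.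
Qed.

Lemma toC_qform n A x : toC (qform n A x) = QF (toM n A) (toV n x).
Proof.
rewrite /qform /QF /inner toC_sum mxE; apply: eq_bigr => i _.
rewrite toC_sum !mxE big_distrr; apply: eq_bigr => j _.
by rewrite !mxE !toC_mul toC_conj.
Qed.

Lemma re_qform n A x : re (qform n A x) = Rc (QF (toM n A) (toV n x)).
Proof. by rewrite -toC_qform. Qed.

Lemma adjM_mul m p q (A : 'M[CM]_(m, p)) (B : 'M[CM]_(p, q)) :
  adjM (A *m B) = adjM B *m adjM A.
Proof. by rewrite /adjM map_mxM trmx_mul. Qed.

Lemma adjMD m p (A B : 'M[CM]_(m, p)) : adjM (A + B) = adjM A + adjM B.
Proof. by rewrite /adjM map_mxD linearD. Qed.

Lemma adjMB m p (A B : 'M[CM]_(m, p)) : adjM (A - B) = adjM A - adjM B.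
Proof. by rewrite /adjM map_mxB linearB. Qed.

Lemma adjMZ m p c (A : 'M[CM]_(m, p)) : adjM (c *: A) = conjc c *: adjM A.
Proof. by rewrite /adjM map_mxZ linearZ. Qed.

Lemma adjMK m p (A : 'M[CM]_(m, p)) : adjM (adjM A) = A.
Proof. by apply/matrixP => i j; rewrite !mxE conjcK. Qed.

Lemma adjMV n (A : 'M[CM]_n) : adjM (invmx A) = invmx (adjM A).
Proof. by rewrite /adjM map_invmx trmx_inv. Qed.

Lemma conjc_realC (t : R) : conjc t%:C = t%:C.
Proof. by rewrite conjc_real. Qed.

Lemma Rc_conj (z : CM) : Rc (conjc z) = Rc z. Proof. by case: z. Qed.
Lemma Rc_add (z w : CM) : Rc (z + w) = Rc z + Rc w. Proof. by case: z; case: w. Qed.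
Lemma Rc_mulr (t : R) (z : CM) : Rc (t%:C * z) = t * Rc z.
Proof. by case: z => a b /=; rewrite mul0r subr0. Qed.

Section QuadraticForms.
Variable n : nat.
Implicit Types (M P : 'M[CM]_n) (u v w d : 'cV[CM]_n).

Lemma innerDl u u' w : inner (u + u') w = inner u w + inner u' w.
Proof. by rewrite /inner adjMD mulmxDl mxE. Qed.

Lemma innerDr u w w' : inner u (w + w') = inner u w + inner u w'.
Proof. by rewrite /inner mulmxDr mxE. Qed.

Lemma innerZl c u w : inner (c *: u) w = conjc c * inner u w.
Proof. by rewrite /inner adjMZ -scalemxAl mxE. Qed.

Lemma innerZr c u w : inner u (c *: w) = c * inner u w.
Proof. by rewrite /inner -scalemxAr mxE. Qed.

Lemma inner0r u : inner u 0 = 0.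
Proof. by rewrite /inner mulmx0 mxE. Qed.

Lemma innerM M u w : inner u (M *m w) = inner (adjM M *m u) w.
Proof. by rewrite /inner adjM_mul adjMK mulmxA. Qed.

Lemma innerC u w : inner w u = conjc (inner u w).
Proof.
rewrite /inner !mxE rmorph_sum; apply: eq_bigr => k _.
by rewrite !mxE rmorphM /= conjcK mulrC.
Qed.

Lemma QFZ c M v : QF (c *: M) v = c * QF M v.
Proof. by rewrite /QF -scalemxAl innerZr. Qed.

Lemma QFD M P v : QF (M + P) v = QF M v + QF P v.
Proof. by rewrite /QF mulmxDl innerDr. Qed.

Lemma QFB M P v : QF (M - P) v = QF M v - QF P v.
Proof. by rewrite /QF mulmxBl /inner mulmxBr !mxE. Qed.

Lemma QF_adj M v : QF (adjM M) v = conjc (QF M v).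
Proof. by rewrite /QF innerM adjMK innerC. Qed.

Lemma Rc_QF_shift P u0 u : adjM P = P ->
  Rc (QF P u) = Rc (QF P u0) + Rc (inner (P *m u0) (u - u0)) *+ 2 + Rc (QF P (u - u0)).
Proof.
move=> hP; rewrite -{1}(subrK u0 u) (addrC (u - u0)); move: (u - u0) => d.
rewrite /QF mulmxDr innerDl !innerDr (innerM P u0 d) hP (innerC (P *m u0) d).
by rewrite !Rc_add Rc_conj mulr2n; ring.
Qed.

Definition herm_part M := Rhalf%:C *: (M + adjM M).

Lemma Rc_QF_herm_part M v : Rc (QF (herm_part M) v) = Rc (QF M v).
Proof. by rewrite QFZ Rc_mulr QFD QF_adj Rc_add Rc_conj; exact: Rhalf_double. Qed.

Lemma herm_part_adj M : adjM (herm_part M) = herm_part M.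
Proof. by rewrite adjMZ conjc_realC adjMD adjMK addrC. Qed.

Definition accretivemx M := forall v, v != 0 -> 0 < Rc (QF M v).

Lemma Rc_QF_ge0 M v : accretivemx M -> 0 <= Rc (QF M v).
Proof.
move=> aM; have [->|v0] := eqVneq v 0; last exact/ltW/aM.
by rewrite /QF mulmx0 inner0r.
Qed.

Lemma accretivemx_unit M : accretivemx M -> M \in unitmx.
Proof.
move=> aM; rewrite unitmxE unitfE -det_tr; apply/negP => /det0P [w w0 wM].
have wT0 : w^T != 0 by rewrite -(inj_eq (@trmx_inj _ _ _)) trmxK linear0.
have := aM _ wT0; rewrite /QF.
have -> : M *m w^T = 0 by rewrite -(trmxK M) -trmx_mul wM linear0.
by rewrite inner0r ltxx.
Qed.

Lemma accretivemx_inv M : accretivemx M -> accretivemx (invmx M).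
Proof.
move=> aM v v0; have uM := accretivemx_unit aM.
set y := invmx M *m v.
have vE : v = M *m y by rewrite /y mulmxA mulmxV // mul1mx.
have y0 : y != 0 by apply: contraNneq v0 => y0; rewrite vE y0 mulmx0.
by rewrite /QF -/y {1}vE innerC Rc_conj; exact: aM.
Qed.

Lemma accretivemx_comb M P (t : R) : accretivemx M -> accretivemx P -> 0 <= t <= 1 ->
  accretivemx ((1 - t)%:C *: M + t%:C *: P).
Proof.
move=> aM aP /andP [t0 t1] v v0; rewrite QFD !QFZ Rc_add !Rc_mulr.
by have := aM _ v0; have := aP _ v0; nra.
Qed.

Lemma accretivemx_herm_part M : accretivemx M -> accretivemx (herm_part M).
Proof. by move=> aM v v0; rewrite Rc_QF_herm_part; apply: aM. Qed.

End QuadraticForms.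

Section HarmonicMean.
Variable n : nat.
Implicit Types (A B P Q : 'M[CM]_n) (x u v : 'cV[CM]_n).

Definition Hm (t : R) A B := invmx ((1 - t)%:C *: invmx A + t%:C *: invmx B).

Lemma accretivemx_Hm (t : R) A B : accretivemx A -> accretivemx B -> 0 <= t <= 1 ->
  accretivemx (Hm t A B).
Proof. by move=> aA aB t01; apply/accretivemx_inv/accretivemx_comb/t01; apply: accretivemx_inv. Qed.

Lemma Hm_adj (t : R) A B : adjM A = A -> adjM B = B -> adjM (Hm t A B) = Hm t A B.
Proof. by move=> hA hB; rewrite adjMV adjMD !adjMZ !conjc_realC !adjMV hA hB. Qed.

(* With y = (A !_t B) x, the vectors u = A^-1 y and v = B^-1 y decompose x. *)
Lemma Hm_split (t : R) A B x : accretivemx A -> accretivemx B -> 0 <= t <= 1 ->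
  exists u v, [/\ x = (1 - t)%:C *: u + t%:C *: v, A *m u = B *m v &
    QF (Hm t A B) x = (1 - t)%:C * QF A u + t%:C * QF B v].
Proof.
move=> aA aB t01; set y := Hm t A B *m x.
have uC := accretivemx_unit (accretivemx_comb (accretivemx_inv aA) (accretivemx_inv aB) t01).
have xE : x = (1 - t)%:C *: (invmx A *m y) + t%:C *: (invmx B *m y).
  by rewrite !scalemxAl -mulmxDl /y /Hm mulmxA mulmxV // mul1mx.
have AK : A *m (invmx A *m y) = y by rewrite mulmxA mulmxV ?mul1mx // accretivemx_unit.
have BK : B *m (invmx B *m y) = y by rewrite mulmxA mulmxV ?mul1mx // accretivemx_unit.
exists (invmx A *m y), (invmx B *m y); split; rewrite ?AK ?BK //.
by rewrite /QF -/y {1}xE innerDl !innerZl !conjc_realC AK BK.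
Qed.

(* For hermitian P, Q the decomposition of [Hm_split] minimises
   (1 - t) u* P u + t v* Q v over all decompositions x = (1 - t) u + t v:
   the cross terms cancel and the remainders are nonnegative. *)
Lemma Rc_QF_Hm_le (t : R) P Q x u v : adjM P = P -> adjM Q = Q ->
  accretivemx P -> accretivemx Q -> 0 <= t <= 1 -> x = (1 - t)%:C *: u + t%:C *: v ->
  Rc (QF (Hm t P Q) x) <= (1 - t) * Rc (QF P u) + t * Rc (QF Q v).
Proof.
move=> hP hQ aP aQ t01 xE.
have [u0 [v0 [x0E PQ ->]]] := Hm_split x aP aQ t01.
have d0 : (1 - t)%:C *: (u - u0) + t%:C *: (v - v0) = 0.
  by rewrite !scalerBr addrACA -opprD -xE -x0E subrr.
have cross : (1 - t) * Rc (inner (P *m u0) (u - u0)) + t * Rc (inner (P *m u0) (v - v0)) = 0.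
  by rewrite -!Rc_mulr -!innerZr -Rc_add -innerDr d0 inner0r.
rewrite Rc_add !Rc_mulr (Rc_QF_shift u0 u hP) (Rc_QF_shift v0 v hQ) -PQ.
have := Rc_QF_ge0 (u - u0) aP; have := Rc_QF_ge0 (v - v0) aQ.
by move: t01 => /andP [t0 t1]; nra.
Qed.

Lemma Rc_QF_Hm_herm_part (t : R) A B x : accretivemx A -> accretivemx B -> 0 <= t <= 1 ->
  Rc (QF (Hm t (herm_part A) (herm_part B)) x) <= Rc (QF (Hm t A B) x).
Proof.
move=> aA aB t01; have [u [v [xE _ ->]]] := Hm_split x aA aB t01.
rewrite Rc_add !Rc_mulr -(Rc_QF_herm_part A) -(Rc_QF_herm_part B).
by apply: Rc_QF_Hm_le xE; rewrite ?herm_part_adj //; apply: accretivemx_herm_part.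
Qed.

End HarmonicMean.

Definition ccont (f : R -> CM) :=
  continuity (fun t => Rc (f t)) /\ continuity (fun t => Ic (f t)).
Definition mcont m p (F : R -> 'M[CM]_(m, p)) := forall i j, ccont (fun t => F t i j).

Lemma ccont_ext f g : (forall t, f t = g t) -> ccont f -> ccont g.
Proof. by move=> fg [f1 f2]; split; [apply: continuity_eq f1 | apply: continuity_eq f2] => t; rewrite fg. Qed.

Lemma ccont_const c : ccont (fun _ => c).
Proof. by split; apply: continuity_const. Qed.

Lemma ccont_realC (g : R -> R) : continuity g -> ccont (fun t => (g t)%:C).
Proof. by split => //; apply: continuity_const. Qed.

Lemma ccont_add f g : ccont f -> ccont g -> ccont (fun t => f t + g t).
Proof.
move=> [f1 f2] [g1 g2]; split.
  by apply: continuity_eq (continuity_plus _ _ f1 g1) => t; rewrite /plus_fct; case: (f t); case: (g t).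
by apply: continuity_eq (continuity_plus _ _ f2 g2) => t; rewrite /plus_fct; case: (f t); case: (g t).
Qed.

Lemma ccont_mul f g : ccont f -> ccont g -> ccont (fun t => f t * g t).
Proof.
move=> [f1 f2] [g1 g2]; split.
  apply: continuity_eq (continuity_minus _ _ (continuity_mult _ _ f1 g1) (continuity_mult _ _ f2 g2)).
  by move=> t; rewrite /minus_fct /mult_fct; case: (f t); case: (g t).
apply: continuity_eq (continuity_plus _ _ (continuity_mult _ _ f1 g2) (continuity_mult _ _ f2 g1)).
by move=> t; rewrite /plus_fct /mult_fct; case: (f t); case: (g t).
Qed.

Lemma ccont_inv f : ccont f -> (forall t, f t != 0) -> ccont (fun t => (f t)^-1).
Proof.
move=> [f1 f2] f0.
have n0 t : Rc (f t) ^+ 2 + Ic (f t) ^+ 2 != 0.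
  apply: contra (f0 t); case: (f t) => a b /=.
  by rewrite paddr_eq0 ?sqr_ge0 // !sqrf_eq0 => /andP [/eqP-> /eqP->].
have ninv : continuity (fun t => (Rc (f t) ^+ 2 + Ic (f t) ^+ 2)^-1).
  apply: continuity_eq (continuity_inv _ (continuity_plus _ _ (continuity_mult _ _ f1 f1)
    (continuity_mult _ _ f2 f2)) (fun t => elimN eqP (n0 t))) => t.
  by rewrite /inv_fct /plus_fct /mult_fct !expr2.
split.
  by apply: continuity_eq (continuity_mult _ _ f1 ninv) => t; rewrite /mult_fct; case: (f t).
apply: continuity_eq (continuity_opp _ (continuity_mult _ _ f2 ninv)) => t.
by rewrite /opp_fct /mult_fct; case: (f t).
Qed.

Lemma ccont_sum (I : Type) (r : seq I) (P : pred I) (F : I -> R -> CM) :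
  (forall i, ccont (F i)) -> ccont (fun t => \sum_(i <- r | P i) F i t).
Proof.
move=> cF; elim: r => [|a r IH]; first by apply: ccont_ext (ccont_const 0) => t; rewrite big_nil.
case Pa: (P a); last by apply: ccont_ext IH => t; rewrite big_cons Pa.
by apply: ccont_ext (ccont_add (cF a) IH) => t; rewrite big_cons Pa.
Qed.

Lemma ccont_prod (I : Type) (r : seq I) (P : pred I) (F : I -> R -> CM) :
  (forall i, ccont (F i)) -> ccont (fun t => \prod_(i <- r | P i) F i t).
Proof.
move=> cF; elim: r => [|a r IH]; first by apply: ccont_ext (ccont_const 1) => t; rewrite big_nil.
case Pa: (P a); last by apply: ccont_ext IH => t; rewrite big_cons Pa.
by apply: ccont_ext (ccont_mul (cF a) IH) => t; rewrite big_cons Pa.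
Qed.

Lemma mcont_const m p (M : 'M[CM]_(m, p)) : mcont (fun _ => M).
Proof. by move=> i j; apply: ccont_const. Qed.

Lemma mcont_add m p (F G : R -> 'M[CM]_(m, p)) : mcont F -> mcont G -> mcont (fun t => F t + G t).
Proof. by move=> cF cG i j; apply: ccont_ext (ccont_add (cF i j) (cG i j)) => t; rewrite mxE. Qed.

Lemma mcont_scale m p (c : R -> CM) (F : R -> 'M[CM]_(m, p)) :
  ccont c -> mcont F -> mcont (fun t => c t *: F t).
Proof. by move=> cc cF i j; apply: ccont_ext (ccont_mul cc (cF i j)) => t; rewrite mxE. Qed.

Lemma mcont_mul m p q (F : R -> 'M[CM]_(m, p)) (G : R -> 'M[CM]_(p, q)) :
  mcont F -> mcont G -> mcont (fun t => F t *m G t).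
Proof.
move=> cF cG i j; apply: ccont_ext (ccont_sum (index_enum 'I_p) xpredT
  (fun k => ccont_mul (cF i k) (cG k j))) => t.
by rewrite mxE.
Qed.

Lemma ccont_det m (F : R -> 'M[CM]_m) : mcont F -> ccont (fun t => \det (F t)).
Proof.
move=> cF; apply: ccont_sum => s; apply: ccont_mul; first exact: ccont_const.
by apply: ccont_prod => i; apply: cF.
Qed.

(* Cramer's rule. *)
Lemma mcont_inv m (F : R -> 'M[CM]_m) :
  mcont F -> (forall t, F t \in unitmx) -> mcont (fun t => invmx (F t)).
Proof.
move=> cF uF i j; apply: (@ccont_ext (fun t => (\det (F t))^-1 *
  ((-1) ^+ (j + i) * \det (row' j (col' i (F t)))))).
  by move=> t; rewrite /invmx uF !mxE /cofactor.
apply: ccont_mul; first by apply: (ccont_inv (ccont_det cF)) => t; rewrite -unitfE -unitmxE.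
apply: ccont_mul; first exact: ccont_const.
by apply: ccont_det => k l; apply: ccont_ext (cF (lift j k) (lift i l)) => t; rewrite !mxE.
Qed.

Lemma continuity_Rc_QF n (F : R -> 'M[CM]_n) v :
  mcont F -> continuity (fun t => Rc (QF (F t) v)).
Proof. by move=> cF; have [] := mcont_mul (mcont_const (adjM v)) (mcont_mul cF (mcont_const v)) 0 0. Qed.

Lemma mcont_Hm_clamp n (A B : 'M[CM]_n) : accretivemx A -> accretivemx B ->
  mcont (fun t => Hm (clamp t) A B).
Proof.
move=> aA aB; apply: mcont_inv => [|t].
  apply: mcont_add; apply: mcont_scale; try exact: mcont_const; apply: ccont_realC.
    exact: continuity_minus (continuity_const _ _) continuity_clamp.
  exact: continuity_clamp.
apply/accretivemx_unit/accretivemx_comb; try exact: accretivemx_inv.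
by have [/RleP ? /RleP ?] := clamp_in01 t; apply/andP.
Qed.

Lemma in01P t : in01 t -> 0 <= t <= 1.
Proof. by move=> [/RleP t0 /RleP t1]; apply/andP. Qed.

Lemma toM_ReM n A : toM n (Defs.ReM A) = herm_part (toM n A).
Proof. by rewrite /Defs.ReM toM_scal toM_add toM_adj. Qed.

Lemma hermitianP n M : Defs.hermitian n M <-> adjM (toM n M) = toM n M.
Proof. by rewrite /Defs.hermitian meqP toM_adj. Qed.

Lemma ReM_hermitian n M : Defs.hermitian n (Defs.ReM M).
Proof. by apply/hermitianP; rewrite toM_ReM herm_part_adj. Qed.

Lemma re_qform_ReM n M x : re (qform n (Defs.ReM M) x) = re (qform n M x).
Proof. by rewrite !re_qform toM_ReM Rc_QF_herm_part. Qed.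

Lemma re_qform_msub n M N x :
  re (qform n (msub M N) x) = Rminus (re (qform n M x)) (re (qform n N x)).
Proof. by rewrite !re_qform toM_sub QFB; case: (QF _ _); case: (QF _ _). Qed.

Lemma accretive_accretivemx n A : accretive n A -> accretivemx (toM n A).
Proof.
move=> [_ pos] v v0; rewrite -Rc_QF_herm_part -toM_ReM -(fromVK v) -re_qform.
by apply/RltP/pos/nonzeroP; rewrite fromVK.
Qed.

Lemma toM_harm n (t : R) A B : accretivemx (toM n A) -> accretivemx (toM n B) ->
  0 <= t <= 1 -> toM n (harm n t A B) = Hm t (toM n A) (toM n B).
Proof.
move=> aA aB t01; rewrite /harm minv_spec toM_add !toM_scal !minv_spec ?accretivemx_unit //.
by apply: accretivemx_comb => //; apply: accretivemx_inv.
Qed.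

Lemma harm_entries_ext_continuous n A B : accretivemx (toM n A) -> accretivemx (toM n B) ->
  entries_ext_continuous n (fun t => harm n t A B).
Proof.
move=> aA aB i j /ssrnat.ltP ilt /ssrnat.ltP jlt.
have [cre cim] := mcont_Hm_clamp aA aB (Ordinal ilt) (Ordinal jlt).
have e t : in01 t -> toC (harm n t A B i j) = Hm (clamp t) (toM n A) (toM n B) (Ordinal ilt) (Ordinal jlt).
  by move=> t01; rewrite clamp_id // -toM_harm ?mxE //; apply: in01P.
split; [apply: ext_continuous_eq01 (ext_continuousW cre) | apply: ext_continuous_eq01 (ext_continuousW cim)];
  by move=> t t01; rewrite -e.
Qed.

Section HarmonicIntegral.
Variables (n : nat) (L : (R -> R) -> R) (A B : Mat).
Hypotheses (hL : prob01 L) (aA : accretivemx (toM n A)) (aB : accretivemx (toM n B)).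

Lemma msigma_hermitian : adjM (toM n A) = toM n A -> adjM (toM n B) = toM n B ->
  Defs.hermitian n (msigma n L A B).
Proof.
move=> hA hB; apply: (mint_hermitian hL (harm_entries_ext_continuous aA aB)) => t t01.
by apply/hermitianP; rewrite toM_harm ?Hm_adj //; apply: in01P.
Qed.

Lemma re_qform_msigma x : re (qform n (msigma n L A B) x) =
  L (fun t => Rc (QF (Hm (clamp t) (toM n A) (toM n B)) (toV n x))).
Proof.
rewrite (re_qform_mint hL _ (harm_entries_ext_continuous aA aB)).
by apply: (L_ext hL) => t t01; rewrite re_qform toM_harm ?clamp_id //; apply: in01P.
Qed.

End HarmonicIntegral.

Theorem mainTheorem7 (n : nat) (A B : Mat) (f : R -> R) (L : (R -> R) -> R) :
  in_m f -> represents f L ->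
  accretive n A -> accretive n B ->
  loewner_le n (msigma n L (Defs.ReM A) (Defs.ReM B)) (Defs.ReM (msigma n L A B)) /\
  accretive n (msigma n L A B).
Proof.
move=> _ [hL _] /accretive_accretivemx aA /accretive_accretivemx aB.
have aA' : accretivemx (toM n (Defs.ReM A)) by rewrite toM_ReM; apply: accretivemx_herm_part.
have aB' : accretivemx (toM n (Defs.ReM B)) by rewrite toM_ReM; apply: accretivemx_herm_part.
have clamp01 t : 0 <= clamp t <= 1 := in01P (clamp_in01 t).
split; last first.
  split=> [|x /nonzeroP x0]; first exact: ReM_hermitian.
  rewrite re_qform_ReM re_qform_msigma //.
  apply: (L_gt0 hL) => [|t _]; first exact: continuity_Rc_QF (mcont_Hm_clamp aA aB).
  exact/RltP/accretivemx_Hm.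
split=> [|x].
  apply/hermitianP; rewrite toM_sub adjMB; congr (_ - _); apply/hermitianP.
    exact: ReM_hermitian.
  by apply: msigma_hermitian; rewrite // toM_ReM herm_part_adj.
have cQF M N v : accretivemx M -> accretivemx N ->
    ext_continuous (fun t => Rc (QF (Hm (clamp t) M N) v)).
  by move=> aM aN; apply/ext_continuousW/continuity_Rc_QF/mcont_Hm_clamp.
rewrite re_qform_msub re_qform_ReM !re_qform_msigma // -(L_sub hL); [|exact: cQF..].
apply: (L_ge0 hL) => [|t _]; first by apply: ext_continuous_sub; apply: cQF.
by apply/RleP; rewrite RminusE subr_ge0 !toM_ReM; apply: Rc_QF_Hm_herm_part.
Qed.
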